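(* For $n,m\ge 0$ let $f(n,m)$ be the number of linked cycles $\hat\pi$ on $[n]$ with exactly $m$ singly covered minimal elements. Then $f(1,1)=1$, $f(n,0)=0$ for $n\ge1$, $f(n,m)=0$ if $n<m$, and for all $n\ge2$, $m\ge1$, $$f(n,m)=(2(n-1)-m)f(n-1,m)+f(n-1,m-1).$$
   Context: Two finite sets of integers $E,F$ are nearly disjoint if for every $i\in E\cap F$ either ($i=\min(E)$, $|E|>1$, $i\ne\min(F)$) or ($i=\min(F)$, $|F|>1$, $i\ne\min(E)$). A linked partition of $[n]$ is a set of nonempty subsets (blocks) of $[n]$ with union $[n]$, any two distinct blocks nearly disjoint; each element lies in one or two blocks (singly/doubly covered). A singly covered minimal element is a singly covered element that is the minimum of its block. A linked cycle on $[n]$ is a linked partition of $[n]$ together with a cyclic arrangement of the elements of each block (two linked cycles differ if the partitions or some cyclic arrangement differ). *)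

From mathcomp Require Import all_boot all_order all_fingroup.
From mathcomp Require Import all_algebra.
Set Implicit Arguments. Unset Strict Implicit. Unset Printing Implicit Defensive.

(* [n] = {1,...,n} is represented by 'I_n = {0,...,n-1} (shift by one; all
   notions below only depend on the order, which the shift preserves). *)

Section LinkedCycles.
Variable n : nat.
Local Notation T := 'I_n.

Definition is_min (i : T) (E : {set T}) : bool :=
  (i \in E) && [forall j in E, i <= j].

Definition nearly_disjoint (E F : {set T}) : bool :=
  [forall i in E :&: F,
     (is_min i E && (1 < #|E|) && ~~ is_min i F) ||
     (is_min i F && (1 < #|F|) && ~~ is_min i E)].

Definition linked_partition (P : {set {set T}}) : bool :=
  [&& set0 \notin P, cover P == [set: T] &
      [forall E in P, forall F in P, (E != F) ==> nearly_disjoint E F]].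

Definition cyclic_arrangement (B : {set T}) (c : {perm T}) : bool :=
  perm_on B c && [forall x in B, porbit c x == B].

Definition blocks (L : {set ({set T} * {perm T})}) : {set {set T}} :=
  [set p.1 | p in L].

(* A linked cycle: a linked partition together with a cyclic arrangement
   of each block, encoded as the set of pairs (block, arrangement). *)
Definition linked_cycle (L : {set ({set T} * {perm T})}) : bool :=
  [&& linked_partition (blocks L),
      [forall p in L, cyclic_arrangement p.1 p.2] &
      [forall p in L, forall q in L, (p.1 == q.1) ==> (p == q)]].

Definition singly_covered (P : {set {set T}}) (x : T) : bool :=
  #|[set B in P | x \in B]| == 1.

Definition sc_min_elements (P : {set {set T}}) : {set T} :=
  [set x | singly_covered P x && [exists B in P, is_min x B]].

End LinkedCycles.

Definition f (n m : nat) : nat :=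
  #|[set L : {set ({set 'I_n} * {perm 'I_n})} |
      linked_cycle L && (#|sc_min_elements (blocks L)| == m)]|.

From mathcomp Require Import all_boot all_order all_fingroup all_algebra.
From mathcomp Require Import zify.
Set Implicit Arguments. Unset Strict Implicit. Unset Printing Implicit Defensive.

(* Let [top] be the largest element of [n+1].  If [{top}] is a block, deleting
   it leaves a linked cycle on [n] with one singly covered minimal element
   fewer.  Otherwise [top] lies in a unique block [E] and has a predecessor [x]
   in the cycle of [E]; deleting [top] from that cycle (and dropping [E] when
   [E = {x, top}] and [x] is covered elsewhere) leaves a linked cycle on [n]
   with the same singly covered minimal elements, and records the pair
   [(x, x is the minimum of E)].  Conversely, [top] can be inserted after any
   [x] either into the block in which [x] has the prescribed minimality or, if
   there is none, into a new block [{x, top}]; this works for every pair except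
   [(x, false)] with [x] singly covered minimal, i.e. for [2n - m] pairs. *)

Lemma card_in_bij (aT rT : finType) (A : {set aT}) (B : {set rT})
    (f : aT -> rT) (g : rT -> aT) :
  {in A, forall a, f a \in B} -> {in B, forall b, g b \in A} ->
  {in A, cancel f g} -> {in B, cancel g f} -> #|A| = #|B|.
Proof.
move=> fA gB fK gK; rewrite -(card_in_imset (can_in_inj fK)).
apply: eq_card => b; apply/imsetP/idP => [[a aA ->]|bB]; first exact: fA.
by exists (g b); rewrite ?gB ?gK.
Qed.

Section CyclicOn.
Variable T : finType.
Implicit Types (B : {set T}) (c : {perm T}) (x y : T).

Definition cyclic_on B c := perm_on B c && [forall x in B, porbit c x == B].

Lemma porbit_sub B c x : perm_on B c -> x \in B -> porbit c x \subset B.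
Proof.
move=> onB xB; apply/subsetP => _ /porbitP [i ->].
elim: i => [|i IHi]; first by rewrite expg0 perm1.
by rewrite expgSr permM (perm_closed _ onB).
Qed.

Lemma porbit_fix c x : c x = x -> porbit c x = [set x].
Proof.
move=> cx; apply/setP => y; rewrite inE; apply/porbitP/eqP => [[i ->]|->].
  by rewrite permX_fix.
by exists 0; rewrite expg0 perm1.
Qed.

Lemma cyclic_on_porbit B c x : cyclic_on B c -> x \in B -> porbit c x = B.
Proof. by case/andP => _ /forall_inP cycB xB; apply/eqP/cycB. Qed.

(* Off [B] a permutation on [B] only has fixed points, so it is cyclic on
   [B] exactly when it has one more cycle than [B] has outside points. *)
Lemma cyclic_onE B c : B != set0 ->
  cyclic_on B c = perm_on B c && (#|porbits c| == #|~: B| + 1).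
Proof.
case/set0Pn => x0 x0B; rewrite /cyclic_on; case onB: (perm_on B c) => //=.
have fixC y : y \notin B -> porbit c y = [set y] by move/(out_perm onB)/porbit_fix.
have porbitsE : porbits c = porbit c @: B :|: porbit c @: ~: B.
  by rewrite -imsetU setUCr; apply/setP => O; apply/imsetP/imsetP => -[x _ ->]; exists x.
have disjB : [disjoint porbit c @: B & porbit c @: ~: B].
  apply/pred0P => O /=; apply/andP => -[/imsetP [x xB ->] /imsetP [y]].
  rewrite inE => yB /esym; rewrite fixC // => /setP /(_ y).
  rewrite inE eqxx => /esym yx.
  by move/negP: yB; apply; apply: subsetP (porbit_sub onB xB) _ yx.
have cardC : #|porbit c @: ~: B| = #|~: B|.
  apply: card_in_imset => y z; rewrite !inE => yB zB.
  by rewrite !fixC //; apply: set1_inj.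
rewrite porbitsE cardsU (disjoint_setI0 disjB) cards0 subn0 cardC addnC eqn_add2l.
apply/forall_inP/cards1P => [orbB|[O orbsB] x xB].
  exists B; apply/setP => O; rewrite inE; apply/imsetP/eqP => [[x xB ->]|->].
    exact/eqP/orbB.
  by exists x0 => //; apply/esym/eqP/orbB.
have orbO y : y \in B -> porbit c y = O by move=> yB; apply/set1P; rewrite -orbsB imset_f.
rewrite (orbO x xB) -(orbO x0 x0B) eqEsubset porbit_sub //=.
by apply/subsetP => y yB; rewrite (orbO x0 x0B) -(orbO y yB) porbit_id.
Qed.

Lemma cyclic_on1 x : cyclic_on [set x] 1.
Proof.
apply/andP; split; first exact: perm_on1.
by apply/forall_inP => y /set1P ->; rewrite porbit_fix ?perm1.
Qed.

Lemma cyclic_on_setU1 B c x y : cyclic_on B c -> x \in B -> y \notin B ->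
  cyclic_on (y |: B) (tperm y x * c).
Proof.
move=> cycB xB yB.
have yx : y != x by apply: contraNneq yB => ->.
move: (cycB); rewrite !cyclic_onE; try by apply/set0Pn; exists x; rewrite ?inE ?xB ?orbT.
case/andP => onB /eqP orbsc; apply/andP; split.
  apply: perm_onM; last exact: subset_trans onB (subsetUr _ _).
  by apply: subset_trans (tperm_on y x) _; rewrite setUS ?sub1set.
have := porbits_mul_tperm c y x; rewrite /= (cyclic_on_porbit cycB xB) yB yx orbsc.
have -> : ~: (y |: B) = ~: B :\ y by apply/setP => z; rewrite !inE negb_or andbC.
have := cardsD1 y (~: B); rewrite inE yB /=; lia.
Qed.

Lemma cyclic_on_setD1 B c y : cyclic_on B c -> y \in B -> 1 < #|B| ->
  cyclic_on (B :\ y) (tperm y ((c^-1)%g y) * c).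
Proof.
set x := (c^-1)%g y => cycB yB B_gt1.
have /andP [onB _] := cycB.
have xB : x \in B by rewrite -(perm_closed _ onB) permKV.
have xy : x != y.
  apply: contraTneq B_gt1 => xy; have cy : c y = y by rewrite -{1}xy permKV.
  by rewrite -(cyclic_on_porbit cycB yB) porbit_fix // cards1.
set c' := (tperm y x * c)%g.
have c'y : c' y = y by rewrite permM tpermL permKV.
have onB' : perm_on (B :\ y) c'.
  apply/subsetP => z; rewrite inE => c'z; rewrite !inE.
  have zy : z != y by apply: contraNneq c'z => ->; rewrite c'y.
  rewrite zy; have [-> //|zx] := eqVneq z x.
  apply: contraR c'z => zB; apply/eqP.
  by rewrite permM tpermD 1?eq_sym // (out_perm onB).
rewrite cyclic_onE; last by apply/set0Pn; exists x; rewrite !inE xy.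
rewrite onB'; move: cycB; rewrite cyclic_onE; last by apply/set0Pn; exists y.
case/andP => _ /eqP orbsc.
have := porbits_mul_tperm c' y x; rewrite /= mulgA tperm2 mul1g orbsc.
rewrite porbit_sym porbit_fix // inE xy eq_sym xy /=.
have -> : ~: (B :\ y) = y |: ~: B by apply/setP => z; rewrite !inE negb_and negbK.
rewrite cardsU1 inE yB /=; lia.
Qed.

End CyclicOn.

Section LinkedCyclesOn.
Variable N : nat.
Local Notation T := 'I_N.
Local Notation PT := ({set T} * {perm T})%type.
Implicit Types (x y : T) (E F : {set T}) (P : {set {set T}}) (p q : PT) (L : {set PT}).

Lemma is_minP x E : reflect (x \in E /\ forall y, y \in E -> x <= y) (is_min x E).
Proof. by apply: (iffP andP) => -[xE /forall_inP minx]. Qed.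

Lemma is_min_mem x E : is_min x E -> x \in E.
Proof. by case/is_minP. Qed.

Lemma is_min1 x : is_min x [set x].
Proof. by apply/is_minP; split=> [|y /set1P ->]; rewrite ?set11. Qed.

Lemma ex_is_min E : E != set0 -> exists x, is_min x E.
Proof.
case/set0Pn => x0 x0E; have [x xE minx] := arg_minnP (fun x : T => val x) x0E.
by exists x; apply/is_minP.
Qed.

Lemma nearly_disjointP E F : reflect (forall x, x \in E -> x \in F ->
    (is_min x E && (1 < #|E|) && ~~ is_min x F) ||
    (is_min x F && (1 < #|F|) && ~~ is_min x E))
  (nearly_disjoint E F).
Proof.
apply: (iffP forall_inP) => ndEF x; first by move=> xE xF; apply: ndEF; rewrite inE xE.
by rewrite inE => /andP []; apply: ndEF.
Qed.

Lemma nearly_disjoint_sym E F : nearly_disjoint E F = nearly_disjoint F E.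
Proof. by apply/nearly_disjointP/nearly_disjointP => ndEF x xF xE; rewrite orbC ndEF. Qed.

Lemma nearly_disjoint_min E F x : nearly_disjoint E F -> x \in E -> x \in F ->
  is_min x F = ~~ is_min x E.
Proof.
move=> /nearly_disjointP ndEF xE xF; move: (ndEF x xE xF).
by case: (is_min x E); case: (is_min x F); rewrite ?andbF.
Qed.

Lemma nearly_disjoint_card E F x : nearly_disjoint E F -> x \in E -> x \in F ->
  is_min x E -> 1 < #|E|.
Proof.
move=> /nearly_disjointP ndEF xE xF minE; move: (ndEF x xE xF).
by rewrite minE /= andbF orbF => /andP [].
Qed.

Definition linked_partition_on D P := [&& set0 \notin P, cover P == D &
  [forall E in P, forall F in P, (E != F) ==> nearly_disjoint E F]].

Definition linked_cycle_on D L := [&& linked_partition_on D (blocks L),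
  [forall p in L, cyclic_arrangement p.1 p.2] &
  [forall p in L, forall q in L, (p.1 == q.1) ==> (p == q)]].

Lemma linked_cycleE L : linked_cycle L = linked_cycle_on [set: T] L.
Proof. by []. Qed.

Lemma linked_cycle_onP D L : reflect
  [/\ set0 \notin blocks L, cover (blocks L) = D,
      {in blocks L &, forall E F, E != F -> nearly_disjoint E F},
      {in L, forall p, cyclic_on p.1 p.2} &
      {in L &, forall p q, p.1 = q.1 -> p = q}]
  (linked_cycle_on D L).
Proof.
apply: (iffP and3P) => [[/and3P [P0 /eqP covP /forall_inP ndP] /forall_inP cycL
                          /forall_inP uniqL]|[P0 covP ndP cycL uniqL]].
  split=> // [E F EP FP|p q pL qL pq].
    by move/forall_inP/(_ F FP)/implyP: (ndP E EP).
  by apply/eqP; move/forall_inP/(_ q qL)/implyP: (uniqL p pL); apply; apply/eqP.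
split; first (apply/and3P; split; rewrite ?covP //).
- apply/forall_inP => E EP; apply/forall_inP => F FP; apply/implyP; exact: ndP.
- by apply/forall_inP.
- apply/forall_inP => p pL; apply/forall_inP => q qL.
  by apply/implyP => /eqP /(uniqL p q pL qL) ->.
Qed.

Lemma blocks_f L p : p \in L -> p.1 \in blocks L.
Proof. exact: imset_f. Qed.

Lemma blocks_setU1 L p : blocks (p |: L) = p.1 |: blocks L.
Proof. exact: imsetU1. Qed.

Lemma cover_setU1 E P : cover (E |: P) = E :|: cover P.
Proof. by rewrite /cover bigcup_setU big_set1. Qed.

Lemma card_blocks_at_setU1 P E y : E \notin P ->
  #|[set B in E |: P | y \in B]| = (y \in E) + #|[set B in P | y \in B]|.
Proof.
move=> EP; have [yE|yE] := boolP (y \in E).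
  rewrite (_ : [set B in _ | _] = E |: [set B in P | y \in B]).
    by rewrite cardsU1 inE (negbTE EP).
  by apply/setP => B; rewrite !inE; have [->|] := eqVneq B E; rewrite ?yE.
apply: eq_card => B; rewrite !inE.
by have [->|] := eqVneq B E; rewrite ?(negbTE yE) ?andbF.
Qed.

Lemma card_blocks_at_gt0 P E y : E \in P -> y \in E -> 0 < #|[set B in P | y \in B]|.
Proof. by move=> EP yE; apply/card_gt0P; exists E; rewrite inE EP. Qed.

Lemma in_sc_min P y : (y \in sc_min_elements P) =
  (#|[set B in P | y \in B]| == 1) && [exists B in P, is_min y B].
Proof. by rewrite inE. Qed.

Lemma in_sc_min_setU1 P E y : E \notin P -> (y \in sc_min_elements (E |: P)) =
  ((y \in E) + #|[set B in P | y \in B]| == 1) &&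
  (is_min y E || [exists B in P, is_min y B]).
Proof.
move=> EP; rewrite in_sc_min card_blocks_at_setU1 //; congr (_ && _).
apply/exists_inP/orP => [[B /setU1P [->|BP] minB]|[minE|/exists_inP [B BP minB]]].
- by left.
- by right; apply/exists_inP; exists B.
- by exists E; rewrite ?setU11.
- by exists B; rewrite ?setU1r.
Qed.

Lemma sc_min_setU1_eq P E E' y : E \notin P -> E' \notin P ->
  (y \in E) = (y \in E') -> is_min y E = is_min y E' ->
  (y \in sc_min_elements (E |: P)) = (y \in sc_min_elements (E' |: P)).
Proof. by move=> EP E'P yEE' minEE'; rewrite !in_sc_min_setU1 // yEE' minEE'. Qed.

Lemma sc_min_notin_cover P y : y \notin cover P -> y \notin sc_min_elements P.
Proof.
move=> yP; rewrite in_sc_min negb_and; apply/orP; right.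
apply: contra yP => /exists_inP [B BP /is_min_mem yB].
by apply/bigcupP; exists B.
Qed.

Lemma sc_min_is_min P B y : B \in P -> y \in B -> y \in sc_min_elements P -> is_min y B.
Proof.
move=> BP yB; rewrite in_sc_min => /andP [/cards1P [B1 atyE] /exists_inP [C CP minC]].
have atyP B' : B' \in P -> y \in B' -> B' = B1.
  by move=> B'P yB'; apply/set1P; rewrite -atyE inE B'P.
by rewrite (atyP B BP yB) -(atyP C CP (is_min_mem minC)).
Qed.

Section LinkedCycle.
Variables (D : {set T}) (L : {set PT}).
Hypothesis lcL : linked_cycle_on D L.

Lemma linked_cycle_on_blocksD1 p : p \in L -> blocks (L :\ p) = blocks L :\ p.1.
Proof.
case/linked_cycle_onP: lcL => _ _ _ _ uniqL pL; apply/setP => E; rewrite !inE.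
apply/imsetP/andP => [[q /setD1P [qp qL] ->]|[Ep /imsetP [q qL Eq]]].
  by split; [apply: contra qp => /eqP/(uniqL q p qL pL)/eqP|apply: blocks_f].
exists q => //; rewrite !inE qL andbT.
by apply: contraNneq Ep => qp; rewrite Eq qp.
Qed.

Lemma linked_cycle_on_setD1 p : p \in L ->
  linked_cycle_on (cover (blocks L :\ p.1)) (L :\ p).
Proof.
move=> pL; rewrite -(linked_cycle_on_blocksD1 pL).
have sub q : q \in L :\ p -> q \in L by case/setD1P.
have subB E : E \in blocks (L :\ p) -> E \in blocks L.
  by case/imsetP => q /sub qL ->; apply: blocks_f.
case/linked_cycle_onP: lcL => P0 _ ndP cycL uniqL; apply/linked_cycle_onP; split=> //.
- by apply: contra P0; apply: subB.
- by move=> E F /subB EP /subB FP; apply: ndP.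
- by move=> q /sub; apply: cycL.
- by move=> q r /sub qL /sub rL; apply: uniqL.
Qed.

Lemma linked_cycle_on_setU1 p : p.1 \notin blocks L -> p.1 != set0 ->
  cyclic_on p.1 p.2 -> {in blocks L, forall F, nearly_disjoint p.1 F} ->
  linked_cycle_on (p.1 :|: D) (p |: L).
Proof.
move=> pP p0 cycp ndp; case/linked_cycle_onP: lcL => P0 covP ndP cycL uniqL.
apply/linked_cycle_onP; rewrite blocks_setU1; split.
- by rewrite !inE negb_or eq_sym p0.
- by rewrite cover_setU1 covP.
- move=> E F /setU1P [->|EP] /setU1P [->|FP]; rewrite ?eqxx // => EF.
  + exact: ndp.
  + by rewrite nearly_disjoint_sym; apply: ndp.
  + exact: ndP.
- by move=> q /setU1P [->|/cycL].
- move=> q r /setU1P [->|qL] /setU1P [->|rL] // qr.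
  + by move: pP; rewrite qr blocks_f.
  + by move: pP; rewrite -qr blocks_f.
  + exact: uniqL.
Qed.

Lemma not_sc_min_block x : x \in D -> x \notin sc_min_elements (blocks L) ->
  exists2 p, p \in L & (x \in p.1) && ~~ is_min x p.1.
Proof.
case/linked_cycle_onP: lcL => _ covP ndP _ _; rewrite -covP => /bigcupP [_ /imsetP [q qL ->] xq].
have [minq|] := boolP (is_min x q.1); last by exists q; rewrite ?xq.
rewrite in_sc_min negb_and => /orP [|/exists_inP []]; last by exists q.1; rewrite ?blocks_f.
rewrite eqn_leq (card_blocks_at_gt0 (blocks_f qL) xq) andbT -ltnNge.
case/card_gt1P => E [F []]; rewrite !inE => /andP [/imsetP [p pL ->] xp].
case/andP => /imsetP [r rL ->] xr pr.
have minr := nearly_disjoint_min (ndP _ _ (blocks_f pL) (blocks_f rL) pr) xp xr.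
have [minp|] := boolP (is_min x p.1); last by exists p; rewrite ?xp.
by exists r; rewrite // xr minr minp.
Qed.

End LinkedCycle.
End LinkedCyclesOn.

Section TopElement.
Variable n : nat.
Local Notation T := 'I_n.+1.
Local Notation PT := ({set T} * {perm T})%type.
Local Notation top := (@ord_max n).
Implicit Types (x y : T) (E F : {set T}) (P : {set {set T}}) (p q : PT) (L : {set PT}).

Definition below_top : {set T} := [set~ top].

Lemma is_min_setU1_top E y : y != top -> is_min y (top |: E) = is_min y E.
Proof.
move=> ytop; apply/is_minP/is_minP => -[yE miny]; split.
- by move: yE; rewrite !inE (negbTE ytop).
- by move=> z zE; apply: miny; rewrite !inE zE orbT.
- by rewrite !inE yE orbT.
- by move=> z /setU1P [->|]; [apply: leq_ord|apply: miny].
Qed.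

Lemma is_min_setD1_top E y : y != top -> is_min y (E :\ top) = is_min y E.
Proof.
move=> ytop; have [topE|topE] := boolP (top \in E).
  by rewrite -{2}(setD1K topE) is_min_setU1_top.
by rewrite (setDidPl _) // disjoint_sym disjoints1.
Qed.

Lemma is_min_top E : is_min top E -> E = [set top].
Proof.
case/is_minP => topE mintop; apply/eqP; rewrite eqEsubset sub1set topE andbT.
apply/subsetP => y yE; rewrite inE; apply/eqP/val_inj/eqP.
by rewrite eqn_leq mintop // leq_ord.
Qed.

Lemma top_in_sc_min P : top \in sc_min_elements P -> [set top] \in P.
Proof. by rewrite in_sc_min => /andP [_ /exists_inP [B BP /is_min_top <-]]. Qed.

Lemma top_notin_sc_min_setU1 P E : [set top] \notin P -> E != [set top] ->
  top \notin sc_min_elements (E |: P).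
Proof.
move=> topP Etop; apply: contra topP => /top_in_sc_min /setU1P [Etop'|//].
by rewrite Etop' eqxx in Etop.
Qed.

Lemma nearly_disjoint_setU1_top E F : top \notin F -> nearly_disjoint E F ->
  nearly_disjoint (top |: E) F.
Proof.
move=> topF /nearly_disjointP ndEF; apply/nearly_disjointP => y.
case/setU1P => [-> /(negP topF) //|yE yF].
have ytop : y != top by apply: contraNneq topF => <-.
have leE : #|E| <= #|top |: E| by rewrite subset_leq_card ?subsetUr.
rewrite is_min_setU1_top //; case/orP: (ndEF y yE yF) => /andP [/andP [-> E_gt1] ->].
  by rewrite (leq_trans E_gt1 leE).
by rewrite E_gt1 /= orbT.
Qed.

Lemma nearly_disjoint_setD1_top E F : top \notin F -> nearly_disjoint E F ->
  {in E :&: F, forall y, is_min y E -> 1 < #|E :\ top|} ->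
  nearly_disjoint (E :\ top) F.
Proof.
move=> topF /nearly_disjointP ndEF E_gt1; apply/nearly_disjointP => y /setD1P [ytop yE] yF.
rewrite is_min_setD1_top //; case/orP: (ndEF y yE yF) => /andP [/andP [minB B_gt1] ->].
  by rewrite minB (E_gt1 y) // inE yE.
by rewrite minB B_gt1 /= orbT.
Qed.

Definition top_singleton : PT := ([set top], 1%g).

(* Inserts [top] right after [x] in the cycle of [p]: MathComp composes
   permutations from left to right. *)
Definition extend_block x p : PT := (top |: p.1, (tperm top x * p.2)%g).

Definition shrink_block x p : PT := (p.1 :\ top, (tperm top x * p.2)%g).

Lemma shrink_blockK x p : top \notin p.1 -> shrink_block x (extend_block x p) = p.
Proof.
by move=> topp; rewrite /shrink_block /= setU1K // mulgA tperm2 mul1g -surjective_pairing.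
Qed.

Lemma extend_blockK x p : top \in p.1 -> extend_block x (shrink_block x p) = p.
Proof.
by move=> topp; rewrite /extend_block /= setD1K // mulgA tperm2 mul1g -surjective_pairing.
Qed.

Lemma extend_block_neq x p : x \in p.1 -> x != top -> extend_block x p != top_singleton.
Proof.
by move=> xp xtop; apply/negP => /eqP [/setP/(_ x)]; rewrite !inE xp orbT (negbTE xtop).
Qed.

Definition insert_top L x b : {set PT} :=
  if [pick p in L | (x \in p.1) && (is_min x p.1 == b)] is Some p
  then extend_block x p |: L :\ p
  else extend_block x ([set x], 1%g) |: L.

Variant insert_top_spec L x b : {set PT} -> Type :=
| InsertExtend p of p \in L & x \in p.1 & is_min x p.1 = b :
    insert_top_spec L x b (extend_block x p |: L :\ p)
| InsertNew of b & {in blocks L, forall B : {set T}, x \in B -> ~~ is_min x B} :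
    insert_top_spec L x b (extend_block x ([set x], 1%g) |: L).

Definition top_block L : PT := odflt top_singleton [pick p in L | top \in p.1].

Definition remove_top L : {set PT} * (T * bool) :=
  let p := top_block L in let x := (p.2^-1)%g top in
  (if (p.1 :\ top == [set x]) && (x \in cover (blocks (L :\ p)))
   then L :\ p else shrink_block x p |: L :\ p,
   (x, is_min x p.1)).

Lemma top_block_setU1 L q : top \in q.1 -> {in blocks L, forall E, top \notin E} ->
  top_block (q |: L) = q.
Proof.
move=> topq topL; rewrite /top_block; case: pickP => [r /andP [/setU1P [//|rL] topr]|].
  by move/negP: (topL _ (blocks_f rL)).
by move/(_ q); rewrite setU11 topq.
Qed.

Lemma remove_top_extend L x p : x != top -> top \notin p.1 -> p.2 top = top ->
  {in blocks L, forall E, top \notin E} ->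
  remove_top (extend_block x p |: L) =
  (if (p.1 == [set x]) && (x \in cover (blocks L)) then L else p |: L, (x, is_min x p.1)).
Proof.
move=> xtop topp fixp topL; have topq : top \in (extend_block x p).1 by apply: setU11.
have qL : extend_block x p \notin L by apply: contraL topq => /blocks_f /topL.
rewrite /remove_top top_block_setU1 // setU1K // -/(shrink_block _ _).
have -> : ((extend_block x p).2^-1)%g top = x.
  by apply: (canLR (permK _)); rewrite permM tpermR fixp.
by rewrite shrink_blockK //= setU1K // is_min_setU1_top.
Qed.

Section BelowTop.
Variable L : {set PT}.
Hypothesis lcL : linked_cycle_on below_top L.

Lemma top_notin_cover : top \notin cover (blocks L).
Proof. by case/linked_cycle_onP: lcL => _ -> _ _ _; rewrite !inE eqxx. Qed.

Lemma top_notin_block E : E \in blocks L -> top \notin E.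
Proof. by move=> EL; apply: contra top_notin_cover => topE; apply/bigcupP; exists E. Qed.

Lemma top_singleton_notin_blocks : [set top] \notin blocks L.
Proof.
by apply: contra top_notin_cover => topL; apply/bigcupP; exists [set top]; rewrite ?set11.
Qed.

Lemma block_fix_top p : p \in L -> p.2 top = top.
Proof.
move=> pL; case/linked_cycle_onP: lcL => _ _ _ /(_ p pL) /andP [onp _] _.
exact: out_perm onp (top_notin_block (blocks_f pL)).
Qed.

Lemma below_top_covered x : x != top -> exists2 p, p \in L & x \in p.1.
Proof.
case/linked_cycle_onP: lcL => _ covL _ _ _ xtop.
have : x \in cover (blocks L) by rewrite covL !inE.
by case/bigcupP => _ /imsetP [p pL ->] xp; exists p.
Qed.

Lemma cover_below_top_setU1 E : E \in blocks L ->
  E :|: cover (blocks L :\ E) = below_top.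
Proof.
case/linked_cycle_onP: lcL => _ covL _ _ _ EL.
by rewrite -cover_setU1 setD1K.
Qed.

Lemma linked_cycle_extend x p : p \in L -> x \in p.1 ->
  linked_cycle_on [set: T] (extend_block x p |: L :\ p).
Proof.
move=> pL xp; have topp := top_notin_block (blocks_f pL).
have bD := linked_cycle_on_blocksD1 lcL pL.
case/linked_cycle_onP: (lcL) => _ _ ndL cycL _.
have := linked_cycle_on_setU1 (linked_cycle_on_setD1 lcL pL) (p := extend_block x p).
rewrite /= -setUA cover_below_top_setU1 ?blocks_f // setUCr; apply => /=.
- by rewrite bD; apply: contraL (setU11 top p.1) => /setD1P [_ /top_notin_block].
- by apply/set0Pn; exists top; rewrite setU11.
- exact: cyclic_on_setU1 (cycL p pL) xp topp.
move=> F; rewrite bD => /setD1P [Fp FL].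
apply: nearly_disjoint_setU1_top (top_notin_block FL) (ndL _ _ (blocks_f pL) FL _).
by rewrite eq_sym.
Qed.

Lemma sc_min_extend x p : p \in L -> x \in p.1 ->
  sc_min_elements (blocks (extend_block x p |: L :\ p)) = sc_min_elements (blocks L).
Proof.
move=> pL xp; have pP := blocks_f pL.
have xtop : x != top by apply: contraTneq xp => ->; apply: top_notin_block.
rewrite blocks_setU1 (linked_cycle_on_blocksD1 lcL pL) -{2}(setD1K pP) /=.
have topP' : top |: p.1 \notin blocks L :\ p.1.
  by apply: contraL (setU11 top p.1) => /setD1P [_ /top_notin_block].
apply/setP => y; have [->|ytop] := eqVneq y top; last first.
  by apply: sc_min_setU1_eq; rewrite ?is_min_setU1_top ?setD11 // !inE (negbTE ytop).
rewrite setD1K // (negbTE (sc_min_notin_cover top_notin_cover)).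
apply/negbTE/top_notin_sc_min_setU1.
  by apply: contra top_singleton_notin_blocks => /setD1P [].
by apply: contraNneq xtop => /setP/(_ x); rewrite !inE xp orbT => <-.
Qed.

Lemma linked_cycle_new_block x : x != top ->
  {in blocks L, forall B : {set T}, x \in B -> ~~ is_min x B} ->
  linked_cycle_on [set: T] (extend_block x ([set x], 1%g) |: L).
Proof.
move=> xtop nominx; have := linked_cycle_on_setU1 lcL (p := extend_block x ([set x], 1%g)).
rewrite /= setUAC setUCr setTU; apply => /=.
- by apply: contraL (setU11 top [set x]) => /top_notin_block.
- by apply/set0Pn; exists top; rewrite setU11.
- by apply: cyclic_on_setU1 (cyclic_on1 x) (set11 x) _; rewrite inE eq_sym.
move=> F FL; apply/nearly_disjointP => y /setU1P [-> topF|/set1P -> xF].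
  by move: topF; rewrite (negbTE (top_notin_block FL)).
rewrite is_min_setU1_top // is_min1 nominx // cardsU1 cards1 inE eq_sym.
by rewrite (negbTE xtop).
Qed.

Lemma sc_min_new_block x : x != top ->
  {in blocks L, forall B : {set T}, x \in B -> ~~ is_min x B} ->
  sc_min_elements (blocks (extend_block x ([set x], 1%g) |: L)) =
  sc_min_elements (blocks L).
Proof.
move=> xtop nominx; rewrite blocks_setU1 /=.
have newL : top |: [set x] \notin blocks L.
  by apply: contraL (setU11 top [set x]) => /top_notin_block.
apply/setP => y; have [->|ytop] := eqVneq y top.
  rewrite (negbTE (sc_min_notin_cover top_notin_cover)).
  apply/negbTE/top_notin_sc_min_setU1; first exact: top_singleton_notin_blocks.
  by apply: contraNneq xtop => /setP/(_ x); rewrite !inE eqxx orbT => <-.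
rewrite in_sc_min_setU1 // in_sc_min is_min_setU1_top //.
have [->|yx] := eqVneq y x.
  have [p pL xp] := below_top_covered xtop.
  rewrite !inE eqxx orbT add1n eqSS eqn0Ngt (card_blocks_at_gt0 (blocks_f pL) xp) /=.
  apply/esym/negbTE; rewrite negb_and; apply/orP; right.
  by apply/exists_inP => -[B BL minB]; move: (nominx B BL (is_min_mem minB)); rewrite minB.
have -> : is_min y [set x] = false by apply: contraNF yx => /is_min_mem; rewrite inE.
by rewrite !inE (negbTE ytop) (negbTE yx).
Qed.

Lemma insert_topP x b : x != top -> b || (x \notin sc_min_elements (blocks L)) ->
  insert_top_spec L x b (insert_top L x b).
Proof.
move=> xtop valid; rewrite /insert_top; case: pickP => [p /and3P [pL xp /eqP minp]|nopick].
  exact: InsertExtend.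
have nominx : {in blocks L, forall B : {set T}, x \in B -> is_min x B != b}.
  by move=> _ /imsetP [p pL ->] xp; move: (nopick p); rewrite pL xp => /negbT.
have bT : b.
  case: b valid nominx {nopick} => //= /(not_sc_min_block lcL) [|p pL /andP [xp nominp] nominx].
    by rewrite !inE.
  by move: (nominx _ (blocks_f pL) xp); rewrite (negbTE nominp).
by apply: InsertNew => // B BL xB; move: (nominx B BL xB); rewrite bT eqb_id.
Qed.

Lemma top_singleton_notin : top_singleton \notin L.
Proof. by apply: contra top_singleton_notin_blocks; apply: blocks_f. Qed.

Lemma insert_top_correct x b : x != top -> b || (x \notin sc_min_elements (blocks L)) ->
  [/\ linked_cycle_on [set: T] (insert_top L x b),
      sc_min_elements (blocks (insert_top L x b)) = sc_min_elements (blocks L) &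
      top_singleton \notin insert_top L x b].
Proof.
move=> xtop valid; case: insert_topP => // [p pL xp _|_ nominx].
  split; [exact: linked_cycle_extend|exact: sc_min_extend|].
  rewrite !inE negb_or (eq_sym top_singleton) extend_block_neq //.
  by rewrite (negbTE top_singleton_notin) andbF.
split; [exact: linked_cycle_new_block|exact: sc_min_new_block|].
by rewrite !inE negb_or (eq_sym top_singleton) extend_block_neq ?set11 // top_singleton_notin.
Qed.

Lemma insert_topK x b : x != top -> b || (x \notin sc_min_elements (blocks L)) ->
  remove_top (insert_top L x b) = (L, (x, b)).
Proof.
have topL : {in blocks L, forall E, top \notin E} by move=> E; apply: top_notin_block.
move=> xtop valid; case: insert_topP => // [p pL xp minp|bT _].
  rewrite remove_top_extend ?top_notin_block ?block_fix_top ?blocks_f //; last first.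
    by move=> E; rewrite (linked_cycle_on_blocksD1 lcL pL) => /setD1P [_ /topL].
  rewrite minp setD1K //; case: ifP => // /andP [/eqP px /bigcupP [B]].
  rewrite (linked_cycle_on_blocksD1 lcL pL) => /setD1P [Bp BL] xB.
  case/linked_cycle_onP: lcL => _ _ ndL _ _.
  have := nearly_disjoint_card (ndL _ _ (blocks_f pL) BL _) xp xB.
  by rewrite eq_sym Bp px is_min1 cards1 ltnn => /(_ isT isT).
have [p pL xp] := below_top_covered xtop.
have xL : x \in cover (blocks L) by apply/bigcupP; exists p.1; rewrite ?blocks_f.
rewrite remove_top_extend ?perm1 //=; last by rewrite inE eq_sym.
by rewrite eqxx xL is_min1 bT.
Qed.

End BelowTop.

Section Removal.
Variable L : {set PT}.
Hypotheses (lcL : linked_cycle_on [set: T] L) (t1L : top_singleton \notin L).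
Local Notation p0 := (top_block L).
Local Notation E0 := (top_block L).1.
Local Notation c0 := (top_block L).2.
Local Notation x0 := (((top_block L).2^-1)%g top).

Lemma top_blockP : p0 \in L /\ top \in E0.
Proof.
case/linked_cycle_onP: lcL => _ covL _ _ _.
have : top \in cover (blocks L) by rewrite covL inE.
case/bigcupP => _ /imsetP [q qL ->] topq; rewrite /top_block.
by case: pickP => [p /andP [pL topp] //|/(_ q)]; rewrite qL topq.
Qed.

Lemma top_block_uniq q : q \in L -> top \in q.1 -> q = p0.
Proof.
have [p0L topE0] := top_blockP; move=> qL topq.
case/linked_cycle_onP: lcL => _ _ ndL _ uniqL; apply: uniqL => //.
apply/eqP/negPn/negP => /(ndL _ _ (blocks_f qL) (blocks_f p0L)) /nearly_disjointP.
move=> /(_ top topq topE0) /orP [] /andP [/andP [/is_min_top -> ]]; by rewrite cards1.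
Qed.

Lemma card_top_block : 1 < #|E0|.
Proof.
have [p0L topE0] := top_blockP; rewrite ltnNge; apply: contra t1L => E0_le1.
case/linked_cycle_onP: lcL => _ _ _ /(_ p0 p0L) /andP [onE0 _] _.
have E0top : E0 = [set top] by apply/eqP; rewrite eq_sym eqEcard sub1set topE0 cards1.
by rewrite /top_singleton -E0top -(perm_on_id onE0 E0_le1) -surjective_pairing.
Qed.

Lemma pred_top_in : x0 \in E0.
Proof.
have [p0L _] := top_blockP; case/linked_cycle_onP: lcL => _ _ _ /(_ p0 p0L) /andP [onE0 _] _.
by rewrite -(perm_closed _ onE0) permKV; case: top_blockP.
Qed.

Lemma pred_top_neq : x0 != top.
Proof.
have [p0L topE0] := top_blockP; apply: contraTneq card_top_block => x0top.
case/linked_cycle_onP: lcL => _ _ _ /(_ p0 p0L) cycE0 _.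
have fixtop : c0 top = top by rewrite -{1}x0top permKV.
by rewrite -(cyclic_on_porbit cycE0 topE0) porbit_fix // cards1.
Qed.

Local Notation rest := (blocks (L :\ top_block L)).

Lemma blocks_rest : rest = blocks L :\ E0.
Proof. by have [p0L _] := top_blockP; rewrite (linked_cycle_on_blocksD1 lcL p0L). Qed.

Lemma top_notin_rest B : B \in rest -> top \notin B.
Proof.
rewrite blocks_rest => /setD1P [BE0 /imsetP [q qL eB]]; apply: contra BE0 => topB.
by rewrite eB (top_block_uniq qL) -?eB.
Qed.

Lemma top_notin_cover_rest : top \notin cover rest.
Proof. by apply/bigcupP => -[B /top_notin_rest /negP]. Qed.

Lemma cover_rest : (E0 :\ top) :|: cover rest = below_top.
Proof.
have [p0L topE0] := top_blockP; case/linked_cycle_onP: lcL => _ covL _ _ _.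
apply/setP => y; rewrite !inE; have [->|ytop] := eqVneq y top.
  by rewrite (negbTE top_notin_cover_rest).
have : y \in cover (blocks L) by rewrite covL.
rewrite -(setD1K (blocks_f p0L)) cover_setU1 blocks_rest inE /=.
by case/orP => ->; rewrite ?orbT.
Qed.

Lemma is_min_rest B : B \in rest -> x0 \in B -> is_min x0 B = ~~ is_min x0 E0.
Proof.
have [p0L _] := top_blockP; case/linked_cycle_onP: lcL => _ _ ndL _ _.
rewrite blocks_rest => /setD1P [BE0 BL] x0B.
apply: nearly_disjoint_min pred_top_in x0B; apply: ndL (blocks_f p0L) BL _.
by rewrite eq_sym.
Qed.

Lemma cyclic_shrink_top_block :
  cyclic_on (shrink_block x0 p0).1 (shrink_block x0 p0).2.
Proof.
have [p0L topE0] := top_blockP; case/linked_cycle_onP: lcL => _ _ _ /(_ p0 p0L) cycE0 _.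
exact: cyclic_on_setD1 cycE0 topE0 card_top_block.
Qed.

Lemma remove_topE : remove_top L =
  (if (E0 :\ top == [set x0]) && (x0 \in cover rest)
   then L :\ p0 else shrink_block x0 p0 |: L :\ p0, (x0, is_min x0 E0)).
Proof. by []. Qed.

Lemma remove_top_drop : E0 :\ top = [set x0] -> x0 \in cover rest ->
  [/\ linked_cycle_on below_top (L :\ p0), is_min x0 E0,
      sc_min_elements (blocks (L :\ p0)) = sc_min_elements (blocks L) &
      insert_top (L :\ p0) x0 true = L].
Proof.
have [p0L topE0] := top_blockP; move=> E0x x0rest.
have minx0 : is_min x0 E0 by rewrite -is_min_setD1_top ?pred_top_neq // E0x is_min1.
have lc' : linked_cycle_on below_top (L :\ p0).
  rewrite -cover_rest E0x (setUidPr _) ?sub1set // blocks_rest.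
  by apply: (linked_cycle_on_setD1 lcL p0L).
have nomin : {in rest, forall B : {set T}, x0 \in B -> ~~ is_min x0 B}.
  by move=> B Brest x0B; rewrite is_min_rest // minx0.
have Lext : L = extend_block x0 ([set x0], 1%g) |: L :\ p0.
  have /andP [onx0 _] := cyclic_shrink_top_block; move: onx0; rewrite /= E0x => onx0.
  rewrite -{1}(setD1K p0L) -{1}(extend_blockK x0 topE0) /shrink_block E0x.
  by rewrite (perm_on_id onx0) ?cards1.
split=> //; first by rewrite [in RHS]Lext (sc_min_new_block lc') ?pred_top_neq.
case: (@insert_topP _ lc' _ true pred_top_neq isT) => [q qL x0q minq|_ _]; last by rewrite -Lext.
by move: (nomin q.1 (blocks_f qL) x0q); rewrite minq.
Qed.

Lemma shrink_top_block_notin_rest : E0 :\ top \notin rest.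
Proof.
have [p0L topE0] := top_blockP; case/linked_cycle_onP: lcL => _ _ ndL _ _.
apply/negP; rewrite blocks_rest => /setD1P [E0'E0 E0'L].
have [|a mina] := @ex_is_min _ (E0 :\ top).
  by apply/set0Pn; exists x0; rewrite !inE pred_top_neq pred_top_in.
have /setD1P [atop aE0] := is_min_mem mina.
have minaE0 : is_min a E0 by rewrite -is_min_setD1_top.
have := nearly_disjoint_min (ndL _ _ (blocks_f p0L) E0'L _) aE0 (is_min_mem mina).
by rewrite eq_sym E0'E0 mina minaE0 => /(_ isT).
Qed.

Lemma linked_cycle_shrink : ~~ ((E0 :\ top == [set x0]) && (x0 \in cover rest)) ->
  linked_cycle_on below_top (shrink_block x0 p0 |: L :\ p0).
Proof.
have [p0L topE0] := top_blockP; case/linked_cycle_onP: (lcL) => _ _ ndL _ _.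
move=> keep; have := linked_cycle_on_setU1 (linked_cycle_on_setD1 lcL p0L)
  (p := shrink_block x0 p0).
rewrite -blocks_rest /= cover_rest; apply=> //=.
- exact: shrink_top_block_notin_rest.
- by apply/set0Pn; exists x0; rewrite !inE pred_top_neq pred_top_in.
- exact: cyclic_shrink_top_block.
move=> F Frest; have /setD1P [FE0 FL] : F \in blocks L :\ E0 by rewrite -blocks_rest.
apply: nearly_disjoint_setD1_top (top_notin_rest Frest) (ndL _ _ (blocks_f p0L) FL _) _.
  by rewrite eq_sym.
move=> y /setIP [yE0 yF] _; rewrite ltnNge; apply: contra keep => E0'le1.
have E0x : E0 :\ top = [set x0].
  by apply/eqP; rewrite eq_sym eqEcard sub1set !inE pred_top_neq pred_top_in cards1.
have ytop : y != top by apply: contraTneq yF => ->; apply: top_notin_rest.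
have /set1P yx0 : y \in [set x0] by rewrite -E0x !inE ytop.
by rewrite E0x eqxx /=; apply/bigcupP; exists F; rewrite -?yx0.
Qed.

Lemma remove_top_keep : ~~ ((E0 :\ top == [set x0]) && (x0 \in cover rest)) ->
  let L' := shrink_block x0 p0 |: L :\ p0 in
  [/\ linked_cycle_on below_top L',
      is_min x0 E0 || (x0 \notin sc_min_elements (blocks L')),
      sc_min_elements (blocks L') = sc_min_elements (blocks L) &
      insert_top L' x0 (is_min x0 E0) = L].
Proof.
have [p0L topE0] := top_blockP; move=> keep L'; have lc' := linked_cycle_shrink keep.
set q := shrink_block x0 p0; have qL' : q \in L' by apply: setU11.
have x0q : x0 \in q.1 by rewrite !inE pred_top_neq pred_top_in.
have minq : is_min x0 q.1 = is_min x0 E0 by rewrite is_min_setD1_top ?pred_top_neq.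
have Lext : L = extend_block x0 q |: L' :\ q.
  rewrite extend_blockK // setU1K ?setD1K //.
  by apply: contra shrink_top_block_notin_rest => /blocks_f.
have valid : is_min x0 E0 || (x0 \notin sc_min_elements (blocks L')).
  have [//|nominE0] /= := boolP (is_min x0 E0).
  by apply: contra nominE0 => /(sc_min_is_min (blocks_f qL') x0q); rewrite minq.
split=> //; first by rewrite [in RHS]Lext (sc_min_extend lc').
case: (insert_topP lc' pred_top_neq valid) => [r /setU1P [->|rL] x0r minr|bT nomin].
- by rewrite -Lext.
- by move: minr; rewrite (is_min_rest (blocks_f rL) x0r); case: (is_min x0 E0).
- by move: (nomin _ (blocks_f qL') x0q); rewrite minq bT.
Qed.

Lemma remove_top_correct :
  [/\ linked_cycle_on below_top (remove_top L).1,
      (remove_top L).2.2 || ((remove_top L).2.1 \notin sc_min_elements (blocks (remove_top L).1)),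
      sc_min_elements (blocks (remove_top L).1) = sc_min_elements (blocks L) &
      insert_top (remove_top L).1 (remove_top L).2.1 (remove_top L).2.2 = L].
Proof.
rewrite remove_topE; case: ifPn => [/andP [/eqP E0x x0rest]|keep] /=.
  by have [? -> ? ?] := remove_top_drop E0x x0rest; split.
exact: remove_top_keep.
Qed.

End Removal.

Lemma linked_cycle_add_top_singleton L : linked_cycle_on below_top L ->
  linked_cycle_on [set: T] (top_singleton |: L) /\
  sc_min_elements (blocks (top_singleton |: L)) = top |: sc_min_elements (blocks L).
Proof.
move=> lcL; have topL := top_notin_cover lcL; split.
  have := @linked_cycle_on_setU1 _ _ _ lcL top_singleton
    (top_singleton_notin_blocks lcL) _ (cyclic_on1 top).
  rewrite /= setUCr; apply; first by apply/set0Pn; exists top; rewrite set11.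
  move=> F FL; apply/nearly_disjointP => y /set1P -> topF.
  by move/negP: (top_notin_block lcL FL).
apply/setP => y; rewrite blocks_setU1 in_sc_min_setU1 ?top_singleton_notin_blocks //=.
rewrite in_setU1 in_sc_min; have [->|ytop] := eqVneq y top.
  rewrite set11 add1n eqSS cards_eq0 is_min1 andbT orTb; apply/eqP/setP => B; rewrite !inE.
  by apply/negbTE; apply: contra topL => /andP [BL topB]; apply/bigcupP; exists B.
have -> : is_min y [set top] = false by apply: contraNF ytop => /is_min_mem; rewrite inE.
by rewrite inE (negbTE ytop).
Qed.

Lemma linked_cycle_drop_top_singleton L : linked_cycle_on [set: T] L ->
  top_singleton \in L -> linked_cycle_on below_top (L :\ top_singleton).
Proof.
move=> lcL t1L; have t1top := top_block_uniq lcL t1L (set11 top).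
suff -> : below_top = cover (blocks L :\ top_singleton.1).
  by apply: (linked_cycle_on_setD1 lcL t1L).
case/linked_cycle_onP: (lcL) => _ covL _ _ _; apply/setP => y; rewrite !inE.
apply/idP/bigcupP => [ytop|[B /setD1P [Btop /imsetP [q qL eB]] yB]].
  have : y \in cover (blocks L) by rewrite covL.
  case/bigcupP => B BL yB; exists B => //; rewrite !inE BL andbT.
  by apply: contraNneq ytop => Btop; move: yB; rewrite Btop inE.
apply: contraNneq Btop => ytop; have topq : top \in q.1 by rewrite -eB -ytop.
by rewrite eB (top_block_uniq lcL qL topq) -t1top.
Qed.

Definition linked_cycles_on D m : {set {set PT}} :=
  [set L | linked_cycle_on D L && (#|sc_min_elements (blocks L)| == m)].

Definition admissible_points L : {set T * bool} :=
  [set xb | (xb.1 != top) && (xb.2 || (xb.1 \notin sc_min_elements (blocks L)))].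

Definition pointed_cycles m : {set {set PT} * (T * bool)} :=
  [set d | (d.1 \in linked_cycles_on below_top m) && (d.2 \in admissible_points d.1)].

Lemma in_pointed_cycles m d : (d \in pointed_cycles m) =
  [&& linked_cycle_on below_top d.1, #|sc_min_elements (blocks d.1)| == m,
      d.2.1 != top & d.2.2 || (d.2.1 \notin sc_min_elements (blocks d.1))].
Proof. by case: d => L [x b]; rewrite inE /= [L \in _]inE [(x, b) \in _]inE -!andbA. Qed.

Lemma card_linked_cycles_with_top_singleton m : 0 < m ->
  #|[set L in linked_cycles_on [set: T] m | top_singleton \in L]| =
  #|linked_cycles_on below_top m.-1|.
Proof.
move=> m_gt0.
apply: (card_in_bij (f := fun L => L :\ top_singleton) (g := fun L => top_singleton |: L)).
- move=> L; rewrite !inE => /andP [/andP [lcL /eqP scL] t1L].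
  have lc' := linked_cycle_drop_top_singleton lcL t1L.
  have [_] := linked_cycle_add_top_singleton lc'; rewrite setD1K // => scE.
  by rewrite lc' -scL scE cardsU1 (sc_min_notin_cover (top_notin_cover lc')) /= add0n.
- move=> L; rewrite !inE => /andP [lcL /eqP scL].
  have [-> ->] := linked_cycle_add_top_singleton lcL.
  by rewrite cardsU1 (sc_min_notin_cover (top_notin_cover lcL)) scL /= add1n prednK ?eqxx.
- by move=> L; rewrite !inE => /andP [_ t1L]; rewrite setD1K.
- move=> L; rewrite !inE => /andP [lcL _]; rewrite setU1K //.
  by apply: contra (top_singleton_notin_blocks lcL); apply: blocks_f.
Qed.

Lemma card_linked_cycles_without_top_singleton m :
  #|[set L in linked_cycles_on [set: T] m | top_singleton \notin L]| = #|pointed_cycles m|.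
Proof.
apply: (card_in_bij (f := remove_top) (g := fun d => insert_top d.1 d.2.1 d.2.2)).
- move=> L; rewrite [L \in _]inE [L \in _]inE => /andP [/andP [lcL scL] t1L].
  have [lc' valid scE _] := remove_top_correct lcL t1L.
  have xtop : (remove_top L).2.1 != top := pred_top_neq lcL t1L.
  by rewrite in_pointed_cycles lc' valid scE scL xtop.
- move=> d; rewrite in_pointed_cycles => /and4P [lcL /eqP scL xtop valid].
  have [lcI scI t1I] := insert_top_correct lcL xtop valid.
  by rewrite inE [_ \in linked_cycles_on _ _]inE lcI scI scL eqxx.
- move=> L; rewrite [L \in _]inE [L \in _]inE => /andP [/andP [lcL _] t1L].
  by case: (remove_top_correct lcL t1L).
- move=> d; rewrite in_pointed_cycles => /and4P [lcL _ xtop valid].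
  by rewrite insert_topK //; case: d {lcL xtop valid} => ? [].
Qed.

Lemma card_admissible_points L m : L \in linked_cycles_on below_top m ->
  #|admissible_points L| = 2 * n - m.
Proof.
rewrite inE => /andP [lcL /eqP scL]; set S := sc_min_elements (blocks L).
have SD : S \subset below_top.
  case/linked_cycle_onP: lcL => _ <- _ _ _; apply/subsetP => y.
  rewrite in_sc_min => /andP [_ /exists_inP [B BL /is_min_mem yB]].
  by apply/bigcupP; exists B.
have -> : admissible_points L =
    setX below_top [set true] :|: setX (below_top :\: S) [set false].
  apply/setP => -[x b]; rewrite !inE /= -in_sc_min -/S.
  by case: b; rewrite /= ?andbT ?andbF ?orbF //= andbC.
rewrite cardsU (_ : _ :&: _ = set0) ?cards0 ?subn0; last first.
  by apply/setP => -[x b]; rewrite !inE; case: b; rewrite ?andbF.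
rewrite !cardsX !cards1 !muln1 cardsD (setIidPr SD) -/S scL cardsC1 card_ord /=.
have := subset_leq_card SD; rewrite scL cardsC1 card_ord /=; lia.
Qed.

Lemma card_pointed_cycles m :
  #|pointed_cycles m| = #|linked_cycles_on below_top m| * (2 * n - m).
Proof.
rewrite -sum_nat_const -sum1dep_card.
rewrite -(pair_big_dep (mem (linked_cycles_on below_top m))
                       (fun L => mem (admissible_points L)) (fun _ _ => 1)) /=.
by apply: eq_bigr => L LD; rewrite sum1_card (card_admissible_points LD).
Qed.

Lemma card_linked_cycles_on_succ m : 0 < m ->
  #|linked_cycles_on [set: T] m| =
  #|linked_cycles_on below_top m.-1| + #|linked_cycles_on below_top m| * (2 * n - m).
Proof.
move=> m_gt0; rewrite -card_linked_cycles_with_top_singleton // -card_pointed_cycles.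
rewrite -card_linked_cycles_without_top_singleton.
rewrite -(cardsID [set L : {set PT} | top_singleton \in L]).
by congr (_ + _); apply: eq_card => L; rewrite !inE andbC.
Qed.

End TopElement.

Section Widen.
Variable n : nat.
Local Notation T := 'I_n.+1.
Local Notation top := (@ord_max n).
Local Notation up := (@lift n.+1 (@ord_max n)).
Implicit Types (k : 'I_n) (B E F : {set 'I_n}) (P : {set {set 'I_n}}) (c : {perm 'I_n}).
Implicit Types (p : {set 'I_n} * {perm 'I_n}) (L : {set {set 'I_n} * {perm 'I_n}}).

Definition up_set B : {set T} := up @: B.
Definition up_perm c : {perm T} := lift_perm top top c.
Definition up_block p := (up_set p.1, up_perm p.2).
Definition up_cycle L := up_block @: L.

Lemma up_neq_top k : up k != top.
Proof. by rewrite eq_sym neq_lift. Qed.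

Lemma mem_up_set k B : (up k \in up_set B) = (k \in B).
Proof. exact/mem_imset/lift_inj. Qed.

Lemma top_notin_up_set B : top \notin up_set B.
Proof. by apply/imsetP => -[k _ /eqP]; rewrite eq_sym (negbTE (up_neq_top k)). Qed.

Lemma up_set_inj : injective up_set.
Proof. exact/imset_inj/lift_inj. Qed.

Lemma card_up_set B : #|up_set B| = #|B|.
Proof. exact/card_imset/lift_inj. Qed.

Lemma up_perm_up c k : up_perm c (up k) = up (c k).
Proof. exact: lift_perm_lift. Qed.

Lemma up_perm_top c : up_perm c top = top.
Proof. exact: lift_perm_id. Qed.

Lemma up_block_inj : injective up_block.
Proof.
move=> [B1 c1] [B2 c2] [/up_set_inj -> ec]; congr (_, _); apply/permP => k.
by apply: (@lift_inj _ top); rewrite -!up_perm_up ec.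
Qed.

Lemma is_min_up k B : is_min (up k) (up_set B) = is_min k B.
Proof.
apply/is_minP/is_minP => -[kB mink]; split.
- by rewrite -mem_up_set.
- by move=> j jB; move: (mink (up j)); rewrite !lift_max mem_up_set; apply.
- by rewrite mem_up_set.
- by move=> _ /imsetP [j jB ->]; rewrite !lift_max mink.
Qed.

Lemma nearly_disjoint_up E F : nearly_disjoint (up_set E) (up_set F) = nearly_disjoint E F.
Proof.
apply/nearly_disjointP/nearly_disjointP => ndEF k.
  by move=> kE kF; move: (ndEF (up k)); rewrite !mem_up_set !is_min_up !card_up_set; apply.
by move=> /imsetP [j jE ->]; rewrite mem_up_set !is_min_up !card_up_set; apply: ndEF.
Qed.

Lemma cover_up P : cover (up_set @: P) = up_set (cover P).
Proof. by rewrite /up_set imset_cover /cover big_imset //; apply: in2W up_set_inj. Qed.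

Lemma porbit_up c k : porbit (up_perm c) (up k) = up_set (porbit c k).
Proof.
have upX i : ((up_perm c) ^+ i)%g (up k) = up ((c ^+ i)%g k).
  by elim: i => [|i IHi]; rewrite ?expg0 ?perm1 // !expgSr !permM IHi up_perm_up.
apply/setP => y; apply/porbitP/imsetP => [[i ->]|[_ /porbitP [i ->] ->]].
  by exists ((c ^+ i)%g k); rewrite ?mem_porbit.
by exists i.
Qed.

Lemma perm_on_up B c : perm_on (up_set B) (up_perm c) = perm_on B c.
Proof.
apply/subsetP/subsetP => onB y; rewrite inE => cy.
  by rewrite -mem_up_set onB // inE up_perm_up (inj_eq lift_inj).
case: (unliftP top y) cy => [k ->|->]; last by rewrite up_perm_top eqxx.
by rewrite up_perm_up (inj_eq lift_inj) mem_up_set => ck; apply: onB; rewrite inE.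
Qed.

Lemma cyclic_on_up B c : cyclic_on (up_set B) (up_perm c) = cyclic_on B c.
Proof.
rewrite /cyclic_on perm_on_up; congr (_ && _).
apply/forall_inP/forall_inP => cycB k.
  by move=> kB; move: (cycB (up k)); rewrite mem_up_set porbit_up (inj_eq up_set_inj); apply.
by case/imsetP => j jB ->; rewrite porbit_up (inj_eq up_set_inj) cycB.
Qed.

Lemma card_blocks_at_up P k :
  #|[set B' in up_set @: P | up k \in B']| = #|[set B in P | k \in B]|.
Proof.
rewrite -(card_imset _ up_set_inj); apply: eq_card => B'; rewrite !inE.
apply/andP/imsetP => [[/imsetP [B BP ->]]|[B]]; rewrite ?inE ?mem_up_set.
  by exists B; rewrite // inE BP.
by case/andP=> BP kB ->; rewrite imset_f ?mem_up_set.
Qed.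

Lemma sc_min_up P : sc_min_elements (up_set @: P) = up_set (sc_min_elements P).
Proof.
apply/setP => y; case: (unliftP top y) => [k ->|->]; last first.
  rewrite (negbTE (top_notin_up_set _)); apply/negbTE/sc_min_notin_cover.
  by rewrite cover_up top_notin_up_set.
rewrite mem_up_set !in_sc_min card_blocks_at_up; congr (_ && _).
apply/exists_inP/exists_inP => [[_ /imsetP [B BP ->]]|[B BP]].
  by rewrite is_min_up; exists B.
by exists (up_set B); rewrite ?imset_f ?is_min_up.
Qed.

Lemma blocks_up L : blocks (up_cycle L) = up_set @: blocks L.
Proof. by rewrite /blocks /up_cycle -!imset_comp. Qed.

Lemma up_set_setT : up_set [set: 'I_n] = below_top n.
Proof.
apply/setP => y; rewrite !inE; case: (unliftP top y) => [k ->|->].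
  by rewrite mem_up_set up_neq_top inE.
by rewrite eqxx (negbTE (top_notin_up_set _)).
Qed.

Lemma linked_cycle_up L : linked_cycle_on (below_top n) (up_cycle L) = linked_cycle L.
Proof.
rewrite linked_cycleE; apply/linked_cycle_onP/linked_cycle_onP; rewrite blocks_up.
  case=> P0 covL ndL cycL uniqL; split.
  - by apply: contra P0 => L0; rewrite -(imset0 up) imset_f.
  - by apply: up_set_inj; rewrite -cover_up covL up_set_setT.
  - by move=> E F EL FL EF; rewrite -nearly_disjoint_up ndL ?imset_f ?(inj_eq up_set_inj).
  - by move=> p pL; rewrite -cyclic_on_up; apply: (cycL (up_block p)); rewrite imset_f.
  - move=> p q pL qL pq; apply: up_block_inj; apply: uniqL; rewrite ?imset_f //.
    by rewrite /= pq.
case=> P0 covL ndL cycL uniqL; split.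
- by apply/imsetP => -[B BL /esym]; rewrite -(imset0 up) => /up_set_inj B0; rewrite -B0 BL in P0.
- by rewrite cover_up covL up_set_setT.
- move=> _ _ /imsetP [E EL ->] /imsetP [F FL ->]; rewrite (inj_eq up_set_inj) => EF.
  by rewrite nearly_disjoint_up ndL.
- by move=> _ /imsetP [p pL ->]; rewrite cyclic_on_up cycL.
- by move=> _ _ /imsetP [p pL ->] /imsetP [q qL ->] /= /up_set_inj pq; rewrite (uniqL p q).
Qed.

Lemma up_perm_surj (s : {perm T}) : s top = top -> exists c, s = up_perm c.
Proof.
move=> stop; have s_up k : s (up k) != top.
  by rewrite -{2}stop (inj_eq perm_inj) up_neq_top.
pose g k := odflt k (unlift top (s (up k))).
have up_g k : up (g k) = s (up k).
  by rewrite /g; case: unliftP (s_up k) => [j ->|->] //; rewrite eqxx.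
have g_inj : injective g by move=> k1 k2 /(congr1 up); rewrite !up_g => /perm_inj/lift_inj.
exists (perm g_inj); apply/permP => y; case: (unliftP top y) => [k ->|->].
  by rewrite up_perm_up permE up_g.
by rewrite up_perm_top.
Qed.

Lemma up_cycle_surj (L2 : {set {set T} * {perm T}}) : linked_cycle_on (below_top n) L2 ->
  L2 = up_cycle [set p | up_block p \in L2].
Proof.
move=> lcL2; apply/setP => q; apply/idP/imsetP => [qL2|[p]]; last by rewrite inE => ? ->.
have [c qc] := up_perm_surj (block_fix_top lcL2 qL2).
have [B qB] : exists B, q.1 = up_set B.
  exists (up @^-1: q.1); apply/setP => y; case: (unliftP top y) => [k ->|->].
    by rewrite mem_up_set inE.
  by rewrite (negbTE (top_notin_block lcL2 (blocks_f qL2))) (negbTE (top_notin_up_set _)).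
by exists (B, c); rewrite ?inE /up_block /= -qB -qc -surjective_pairing.
Qed.

Lemma sc_min_up_cycle L :
  #|sc_min_elements (blocks (up_cycle L))| = #|sc_min_elements (blocks L)|.
Proof. by rewrite blocks_up sc_min_up card_up_set. Qed.

Lemma f_eq_card_below_top m : f n m = #|linked_cycles_on (below_top n) m|.
Proof.
rewrite /f; apply: (card_in_bij (f := up_cycle)
  (g := fun L2 : {set {set T} * {perm T}} => [set p | up_block p \in L2])).
- by move=> L; rewrite !inE linked_cycle_up sc_min_up_cycle.
- move=> L2; rewrite !inE => /andP [lcL2 scL2].
  by rewrite -linked_cycle_up -sc_min_up_cycle -(up_cycle_surj lcL2) lcL2.
- by move=> L _; apply/setP => p; rewrite inE (mem_imset _ _ up_block_inj).
- by move=> L2; rewrite inE => /andP [lcL2 _]; rewrite -(up_cycle_surj lcL2).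
Qed.

End Widen.

Lemma f_succ n m : 0 < m -> f n.+1 m = f n m.-1 + f n m * (2 * n - m).
Proof.
move=> m_gt0; rewrite (f_eq_card_below_top n m.-1) (f_eq_card_below_top n m).
by rewrite -card_linked_cycles_on_succ.
Qed.

Lemma f_gt n m : n < m -> f n m = 0.
Proof.
move=> nm; apply/eqP; rewrite cards_eq0; apply/eqP/setP => L; rewrite !inE.
apply/negbTE; rewrite negb_and orbC; apply/orP; left; apply: contraTneq nm => <-.
by rewrite -leqNgt -[X in _ <= X]card_ord max_card.
Qed.

Lemma f_succ0 n : f n.+1 0 = 0.
Proof.
apply/eqP; rewrite cards_eq0; apply/eqP/setP => L; rewrite !inE cards_eq0.
apply/negbTE/andP => -[lcL /eqP scL].
have min0 (E : {set 'I_n.+1}) : ord0 \in E -> is_min ord0 E by move=> E0; apply/is_minP.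
have [||p _ /andP [/min0 ->]] // := not_sc_min_block lcL (x := ord0); first by rewrite inE.
by rewrite scL inE.
Qed.

Lemma f00 : f 0 0 = 1.
Proof.
apply/eqP/cards1P; exists set0; apply/setP => L.
have E0 (E : {set 'I_0}) : E = set0 by apply/setP => -[].
rewrite !inE; apply/andP/eqP => [[/linked_cycle_onP [L0 _ _ _ _] _]|->].
  by apply/setP => p; rewrite inE; apply: contraNF L0 => /blocks_f; rewrite (E0 p.1).
rewrite (E0 (sc_min_elements _)) cards0; split=> //.
apply/linked_cycle_onP; rewrite /blocks imset0.
by split=> [||E F|p|p q]; rewrite ?inE ?(E0 [set: _]) ?(E0 (cover _)).
Qed.

Import GRing.Theory.
Local Open Scope ring_scope.

Theorem proposition4p5 :
  [/\ f 1 1 = 1%N,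
      (forall n : nat, (1 <= n)%N -> f n 0 = 0%N),
      (forall n m : nat, (n < m)%N -> f n m = 0%N) &
      (forall n m : nat, (2 <= n)%N -> (1 <= m)%N ->
         (f n m)%:Z = ((2 * (n - 1))%N%:Z - m%:Z) * (f (n - 1) m)%:Z
                      + (f (n - 1) (m - 1))%:Z)].
Proof.
split.
- by rewrite f_succ // f00 f_gt.
- by case=> // n _; apply: f_succ0.
- exact: f_gt.
case=> // n m _ m_gt0; rewrite subn1 f_succ // subn1 /=.
have [le_m2n|lt_2nm] := leqP m (2 * n).
  by rewrite PoszD PoszM subzn // addrC mulrC.
have lt_nm : (n < m)%N by apply: leq_ltn_trans lt_2nm; rewrite mul2n -addnn leq_addl.
by rewrite (f_gt lt_nm) mul0n mulr0 addn0 add0r.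
Qed.
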